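(* There are infinitely many mixed graphs $M_G$ with $\operatorname{rank} N(M_G)=2$ which are not determined by their spectrum.
   Context: A mixed graph $M_G$ is obtained from a finite simple graph $G$ by orienting the edges of some subset of $E(G)$. With $\omega=\frac{1+\mathbf{i}\sqrt3}{2}$, $N(M_G)$ has $(u,v)$-entry $\omega$ if $\overrightarrow{uv}$ is an arc, $\bar\omega$ if $\overrightarrow{vu}$ is an arc, $1$ for an undirected edge, $0$ otherwise; cospectral means same eigenvalue multiset of $N$. Mixed graphs are considered up to isomorphism. $\mathbb{T}_6=\{1,-1,\omega,\bar\omega,-\omega,-\bar\omega\}$. Given a partition $V(M_G)=\bigcup_{j\in\mathbb{T}_6}V_j$ into six possibly empty sets, an edge or arc $xy$ has type $(j,k)$ if $x\in V_j,y\in V_k$ (arcs directed from $x$ to $y$). The partition is admissible if every undirected edge has type $(j,j)$ or $(j,\omega j)$, and every arc has type $(j,j)$, $(j,\bar\omega j)$ or $(j,-\omega j)$, for some $j$. A three-way switching w.r.t. an admissible partition replaces each undirected edge of type $(j,\omega j)$ by an arc from $V_j$ to $V_{\omega j}$, replaces each arc of type $(j,\bar\omega j)$ by an undirected edge, and reverses each arc of type $(j,-\omega j)$. The converse reverses all arcs. Two mixed graphs are switching equivalent if one is obtained from the other by a sequence of three-way switchings and taking converses. A mixed graph is determined by its spectrum if it is switching equivalent to every mixed graph cospectral with it. *)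

From HB Require Import structures.
From mathcomp Require Import all_boot all_order all_algebra all_field.
Set Implicit Arguments. Unset Strict Implicit. Unset Printing Implicit Defensive.
Import Order.TTheory GRing.Theory Num.Theory.
From Stdlib Require Import Relations.Relation_Operators.
Local Open Scope ring_scope.

(* Kind of the (ordered) vertex pair (u,v) in a mixed graph:
   NoE : not adjacent; Und : undirected edge uv;
   Out : arc u -> v;   In : arc v -> u. *)
Inductive ekind := NoE | Und | Out | In.


Definition flip (a : ekind) : ekind :=
  match a with Out => In | In => Out | x => x end.

Definition mixed_graph (n : nat) := 'I_n -> 'I_n -> ekind.

Definition wf_mixed n (M : mixed_graph n) : Prop :=
  (forall u, M u u = NoE) /\ (forall u v, M v u = flip (M u v)).

Definition omega : algC := (1 + 'i * sqrtC 3%:R) / 2%:R.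

Definition kval (a : ekind) : algC :=
  match a with NoE => 0 | Und => 1 | Out => omega | In => omega^* end.

Definition Nmat n (M : mixed_graph n) : 'M[algC]_n := \matrix_(i, j) kval (M i j).

Definition cospectral n (M1 M2 : mixed_graph n) : Prop :=
  forall a : algC, mup a (char_poly (Nmat M1)) = mup a (char_poly (Nmat M2)).

Definition mg_iso n1 n2 (M1 : mixed_graph n1) (M2 : mixed_graph n2) : Prop :=
  exists h : 'I_n1 -> 'I_n2, bijective h /\ forall u v, M2 (h u) (h v) = M1 u v.

Definition T6 : seq algC := [:: 1; -1; omega; omega^*; - omega; - omega^*].

(* A partition V = U_{j in T6} V_j is encoded by the label map f (x in V_{f x}). *)
Definition admissible n (M : mixed_graph n) (f : 'I_n -> algC) : Prop :=
  (forall x, f x \in T6) /\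
  (forall x y, M x y = Und ->
     f y = f x \/ f y = omega * f x \/ f x = omega * f y) /\
  (forall x y, M x y = Out ->
     f y = f x \/ f y = omega^* * f x \/ f y = - omega * f x).

Definition switch_kind n (M : mixed_graph n) (f : 'I_n -> algC) x y : ekind :=
  match M x y with
  | NoE => NoE
  | Und => if f y == omega * f x then Out
           else if f x == omega * f y then In else Und
  | Out => if f y == omega^* * f x then Und
           else if f y == - omega * f x then In else Out
  | In  => if f x == omega^* * f y then Und
           else if f x == - omega * f y then Out else In
  end.

Definition three_way_switching n (M M' : mixed_graph n) : Prop :=
  exists f, admissible M f /\ forall x y, M' x y = switch_kind M f x y.

Definition converse n (M M' : mixed_graph n) : Prop :=
  forall x y, M' x y = flip (M x y).

(* One step: a three-way switching, taking the converse, or replacing a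
   graph by an isomorphic one (mixed graphs are considered up to isomorphism). *)
Definition sw_step n (M M' : mixed_graph n) : Prop :=
  three_way_switching M M' \/ converse M M' \/ mg_iso M M'.

Definition switching_equivalent n (M1 M2 : mixed_graph n) : Prop :=
  clos_refl_trans _ (@sw_step n) M1 M2 \/ clos_refl_trans _ (@sw_step n) M2 M1.

(* Determined by its spectrum (cospectral graphs necessarily have the same
   order, so we quantify over mixed graphs on the same vertex set). *)
Definition DS n (M : mixed_graph n) : Prop :=
  forall M' : mixed_graph n, wf_mixed M' -> cospectral M M' -> switching_equivalent M M'.

From mathcomp Require Import all_boot all_order all_algebra all_field.
From Stdlib Require Import Relations.Relation_Operators.
Set Implicit Arguments.
Unset Strict Implicit.
Unset Printing Implicit Defensive.
Import Order.TTheory GRing.Theory Num.Theory.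
Local Open Scope ring_scope.

(* The star K_{1,4} and the graph C_4 + K_1 are cospectral, both with spectrum
   {2, -2, 0, 0, 0}, and adjoining k isolated vertices to each keeps them
   cospectral, of rank 2.  A three-way switching or a converse never changes
   which pairs of vertices are adjacent, so the maximum degree of the
   underlying graph is a switching invariant; it is 4 for the first graph and
   2 for the second.  Graphs with different numbers of vertices are not
   isomorphic, so the padded stars form an infinite family. *)

Definition is_edge (a : ekind) : bool := if a is NoE then false else true.

Definition degree n (M : mixed_graph n) (x : 'I_n) : nat :=
  #|[set y | is_edge (M x y)]|.

Definition max_degree n (M : mixed_graph n) : nat := (\max_x degree M x)%N.

Section MaxDegreeInvariance.

Variable n : nat.
Implicit Types M : mixed_graph n.

Lemma is_edge_switch_kind M f x y :
  is_edge (switch_kind M f x y) = is_edge (M x y).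
Proof. by rewrite /switch_kind; case: (M x y); repeat case: ifP. Qed.

Lemma max_degree_eq_adjacency M M' :
  (forall x y, is_edge (M' x y) = is_edge (M x y)) ->
  max_degree M' = max_degree M.
Proof.
move=> adjM; apply: eq_bigr => x _; apply: eq_card => y.
by rewrite !inE adjM.
Qed.

Lemma max_degree_iso M M' : mg_iso M M' -> max_degree M' = max_degree M.
Proof.
case=> h [hbij hM]; rewrite /max_degree (reindex h) /=; last exact: onW_bij.
apply: eq_bigr => x _; rewrite /degree -(card_preimset _ (bij_inj hbij)).
by apply: eq_card => y; rewrite !inE hM.
Qed.

Lemma max_degree_sw_step M M' : sw_step M M' -> max_degree M' = max_degree M.
Proof.
case=> [[f [_ switchM]] | [convM | isoM]].
- by apply: max_degree_eq_adjacency => x y; rewrite switchM is_edge_switch_kind.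
- by apply: max_degree_eq_adjacency => x y; rewrite convM; case: (M x y).
- exact: max_degree_iso.
Qed.

Lemma max_degree_switching_equivalent M M' :
  switching_equivalent M M' -> max_degree M = max_degree M'.
Proof.
have max_degree_crt M1 M2 :
    clos_refl_trans _ (@sw_step n) M1 M2 -> max_degree M1 = max_degree M2.
  by elim=> [? ? /max_degree_sw_step | | ? ? ? _ -> _ ->].
by case=> /max_degree_crt.
Qed.

End MaxDegreeInvariance.

Definition adjmx (R : nzRingType) n (e : rel 'I_n) : 'M[R]_n :=
  \matrix_(i, j) (e i j)%:R.

Lemma map_adjmx (R S : nzRingType) (f : {rmorphism R -> S}) n (e : rel 'I_n) :
  map_mx f (adjmx R e) = adjmx S e.
Proof. by apply/matrixP => i j; rewrite !mxE rmorph_nat. Qed.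

Definition pad_graph n k (e : rel 'I_n) : mixed_graph (n + k) :=
  fun u v => match split u, split v with
             | inl a, inl b => if e a b then Und else NoE
             | _, _ => NoE
             end.
Arguments pad_graph {n} k e.

Lemma split_lshift m n (i : 'I_m) : split (lshift n i) = inl i.
Proof. exact: (unsplitK (inl i)). Qed.

Lemma split_rshift m n (i : 'I_n) : split (rshift m i) = inr i.
Proof. exact: (unsplitK (inr i)). Qed.

Section PaddedGraph.

Variables (n k : nat) (e : rel 'I_n).

Lemma wf_pad_graph : irreflexive e -> symmetric e -> wf_mixed (pad_graph k e).
Proof.
move=> irr_e sym_e; split=> [u | u v]; rewrite /pad_graph.
  by case: (split u) => // a; rewrite irr_e.
by case: (split u) => a; case: (split v) => b //; rewrite sym_e; case: e.
Qed.

Lemma Nmat_pad_graph : Nmat (pad_graph k e) = block_mx (adjmx algC e) 0 0 0.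
Proof.
apply/matrixP => u v; rewrite -[u]splitK -[v]splitK mxE /pad_graph !unsplitK.
case: (split u) => a; case: (split v) => b /=;
  rewrite ?block_mxEul ?block_mxEur ?block_mxEdl ?block_mxEdr !mxE //.
by case: (e a b).
Qed.

Lemma degree_pad_graph_lshift a :
  degree (pad_graph k e) (lshift k a) = #|[set b | e a b]|.
Proof.
rewrite /degree -(card_imset _ (@lshift_inj n k)); apply: eq_card => v.
rewrite -[v]splitK inE /pad_graph split_lshift unsplitK.
case: (split v) => b /=.
  by rewrite mem_imset ?inE; [case: e | exact: lshift_inj].
apply/esym/imsetP => -[c _ /(congr1 val) /= eq_cb].
by have := ltn_ord c; rewrite -eq_cb ltnNge leq_addr.
Qed.

Lemma degree_pad_graph_rshift b : degree (pad_graph k e) (rshift n b) = 0%N.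
Proof. by apply: eq_card0 => v; rewrite inE /pad_graph split_rshift. Qed.

Lemma max_degree_pad_graph :
  max_degree (pad_graph k e) = (\max_a #|[set b | e a b]|)%N.
Proof.
rewrite /max_degree big_split_ord /=.
under eq_bigr do rewrite degree_pad_graph_lshift.
rewrite [X in maxn _ X]big1 ?maxn0 // => b _.
exact: degree_pad_graph_rshift.
Qed.

End PaddedGraph.

Lemma char_poly_intertwine (R : idomainType) n (A B P : 'M[R]_n) :
  \det P != 0 -> P *m A = B *m P -> char_poly A = char_poly B.
Proof.
move=> detP_neq0 PA_BP; set P' := map_mx (@polyC R) P.
have : P' *m char_poly_mx A = char_poly_mx B *m P'.
  rewrite /char_poly_mx mulmxBr mulmxBl -!map_mxM PA_BP.
  by rewrite mul_mx_scalar mul_scalar_mx.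
move/(congr1 determinant); rewrite !det_mulmx det_map_mx mulrC.
by apply: mulIf; rewrite polyC_eq0.
Qed.

Lemma char_poly_block_diag (R : comNzRingType) m n
    (A : 'M[R]_m) (B : 'M[R]_n) :
  char_poly (block_mx A 0 0 B) = char_poly A * char_poly B.
Proof. by rewrite /char_poly char_block_diag_mx det_ublock. Qed.

Lemma mxrank_factor_through (F : fieldType) m n r (A : 'M[F]_(m, n))
    (X : 'M_(m, r)) (Y : 'M_(r, n)) (L : 'M_(r, m)) (R : 'M_(n, r)) :
  A = X *m Y -> L *m A *m R = 1%:M -> \rank A = r.
Proof.
move=> defA LAR; apply/eqP; rewrite eqn_leq; apply/andP; split.
  by rewrite defA (leq_trans (mxrankM_maxr _ _)) ?rank_leq_row.
rewrite -{1}(mxrank1 F r) -LAR (leq_trans (mxrankM_maxl _ _)) //.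
exact: mxrankM_maxr.
Qed.

Definition star_rel : rel 'I_5 := fun i j => (i == 0 :> nat) != (j == 0 :> nat).

(* The 4-cycle 0-1-2-3-0 joins exactly the vertices below 4 of opposite
   parity; vertex 4 is isolated. *)
Definition cycle_rel : rel 'I_5 :=
  fun i j => [&& (i < 4)%N, (j < 4)%N & odd (i + j)].

Lemma wf_pad_star k : wf_mixed (pad_graph k star_rel).
Proof.
by apply: wf_pad_graph => [i | i j]; rewrite /star_rel ?eqxx // eq_sym.
Qed.

Lemma wf_pad_cycle k : wf_mixed (pad_graph k cycle_rel).
Proof.
apply: wf_pad_graph => [i | i j]; rewrite /cycle_rel.
  by rewrite addnn odd_double !andbF.
by rewrite addnC andbCA.
Qed.

Lemma max_degree_pad_star k : max_degree (pad_graph k star_rel) = 4%N.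
Proof.
rewrite max_degree_pad_graph.
under eq_bigr do rewrite -sum1_card big_mkcond.
by rewrite !big_ord_recr !big_ord0 /= !inE.
Qed.

Lemma max_degree_pad_cycle k : max_degree (pad_graph k cycle_rel) = 2%N.
Proof.
rewrite max_degree_pad_graph.
under eq_bigr do rewrite -sum1_card big_mkcond.
by rewrite !big_ord_recr !big_ord0 /= !inE.
Qed.

Definition mx_of_seqs m n (l : seq (seq int)) : 'M[int]_(m, n) :=
  \matrix_(i, j) nth 0 (nth [::] l i) j.

(* A rational similarity between the two adjacency matrices, scaled to be
   integral; [simQ] is [8 * simP^-1]. *)
Definition simP : 'M[int]_5 := mx_of_seqs 5 5
  [:: [:: 2;  3; -1; -1; -1]; [:: 0;  3;  3; -1; -1]; [:: 2; -3;  1;  1;  1];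
      [:: 0; -1; -1;  3;  3]; [:: 0;  1;  1;  1; -3]].

Definition simQ : 'M[int]_5 := mx_of_seqs 5 5
  [:: [::  2; 0;  2; 0;  0]; [:: 1; 1; -1; 1;  0]; [:: -1; 2;  1; 0;  0];
      [::  0; 0;  0; 2;  2]; [:: 0; 1;  0; 1; -2]].

Lemma simP_simQ : simP *m simQ = 8%:M.
Proof.
apply/matrixP => i j; rewrite !mxE !big_ord_recr !big_ord0 /= !mxE.
by case: i => [[|[|[|[|[|i]]]]] ?] //; case: j => [[|[|[|[|[|j]]]]] ?].
Qed.

Lemma simP_intertwines :
  simP *m adjmx int star_rel = adjmx int cycle_rel *m simP.
Proof.
apply/matrixP => i j; rewrite !mxE !big_ord_recr !big_ord0 /= !mxE.
by case: i => [[|[|[|[|[|i]]]]] ?] //; case: j => [[|[|[|[|[|j]]]]] ?].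
Qed.

Lemma det_simP_neq0 : \det simP != 0.
Proof.
apply: contraTneq isT => detP0; have := congr1 determinant simP_simQ.
by rewrite det_mulmx detP0 mul0r det_scalar => /esym/eqP; rewrite expf_eq0.
Qed.

Lemma cospectral_pad_star_cycle k :
  cospectral (pad_graph k star_rel) (pad_graph k cycle_rel).
Proof.
have char_star_cycle :
    char_poly (adjmx int star_rel) = char_poly (adjmx int cycle_rel).
  exact: char_poly_intertwine det_simP_neq0 simP_intertwines.
move=> a; rewrite !Nmat_pad_graph !char_poly_block_diag.
by rewrite -!(map_adjmx (intr : int -> algC)) -!map_char_poly char_star_cycle.
Qed.

Definition starX : 'M[int]_(5, 2) :=
  mx_of_seqs 5 2 [:: [:: 1; 0]; [:: 0; 1]; [:: 0; 1]; [:: 0; 1]; [:: 0; 1]].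
Definition starY : 'M[int]_(2, 5) :=
  mx_of_seqs 2 5 [:: [:: 0; 1; 1; 1; 1]; [:: 1; 0; 0; 0; 0]].
Definition starL : 'M[int]_(2, 5) :=
  mx_of_seqs 2 5 [:: [:: 1; 0; 0; 0; 0]; [:: 0; 1; 0; 0; 0]].
Definition starR : 'M[int]_(5, 2) :=
  mx_of_seqs 5 2 [:: [:: 0; 1]; [:: 1; 0]; [:: 0; 0]; [:: 0; 0]; [:: 0; 0]].

Lemma starX_starY : starX *m starY = adjmx int star_rel.
Proof.
apply/matrixP => i j; rewrite !mxE !big_ord_recr !big_ord0 /= !mxE.
by case: i => [[|[|[|[|[|i]]]]] ?] //; case: j => [[|[|[|[|[|j]]]]] ?].
Qed.

Lemma starL_star_starR : starL *m adjmx int star_rel *m starR = 1%:M.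
Proof.
apply/matrixP => i j; rewrite !mxE !big_ord_recr !big_ord0 /= !mxE.
rewrite !big_ord_recr !big_ord0 /= !mxE.
by case: i => [[|[|i]] ?] //; case: j => [[|[|j]] ?].
Qed.

Lemma rank_pad_star k : \rank (Nmat (pad_graph k star_rel)) = 2%N.
Proof.
rewrite Nmat_pad_graph rank_diag_block_mx mxrank0 addn0.
apply: (@mxrank_factor_through _ _ _ _ _ (map_mx intr starX) (map_mx intr starY)
                               (map_mx intr starL) (map_mx intr starR)).
  by rewrite -map_mxM starX_starY map_adjmx.
by rewrite -(map_adjmx (intr : int -> algC)) -!map_mxM starL_star_starR map_mx1.
Qed.

Lemma pad_star_not_DS k : ~ DS (pad_graph k star_rel).
Proof.
move=> /(_ _ (wf_pad_cycle k) (cospectral_pad_star_cycle k)).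
move/max_degree_switching_equivalent.
by rewrite max_degree_pad_star max_degree_pad_cycle.
Qed.

Theorem proposition5p11 :
  exists g : nat -> {n : nat & mixed_graph n},
    (forall k, wf_mixed (projT2 (g k)) /\
               \rank (Nmat (projT2 (g k))) = 2%N /\
               ~ DS (projT2 (g k))) /\
    (forall i j, i <> j -> ~ mg_iso (projT2 (g i)) (projT2 (g j))).
Proof.
exists (fun k => existT _ (5 + k)%N (pad_graph k star_rel)); split.
  move=> k; split; first exact: wf_pad_star.
  by split; [exact: rank_pad_star | exact: pad_star_not_DS].
move=> i j neq_ij [h [hbij _]]; apply: neq_ij; apply/eqP.
rewrite -(eqn_add2l 5) -[(5 + i)%N]card_ord -[(5 + j)%N]card_ord.
by rewrite (bij_eq_card hbij).
Qed.
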